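(* Let $d,n,k\ge1$, fix vectors $x^{(1)},\dots,x^{(n+1)}\in\mathbb{R}^d$ and $w_\star\in\mathbb{R}^d$, and set $y^{(i)}=\langle x^{(i)},w_\star\rangle$ for $i=1,\dots,n$. Let $$Z_0=\begin{bmatrix} x^{(1)} & \cdots & x^{(n)} & x^{(n+1)}\\ y^{(1)} & \cdots & y^{(n)} & 0\end{bmatrix}\in\mathbb{R}^{(d+1)\times(n+1)},\qquad M=\begin{bmatrix} I_n & 0\\ 0& 0\end{bmatrix}\in\mathbb{R}^{(n+1)\times(n+1)}.$$ Let $A_0,\dots,A_k\in\mathbb{R}^{d\times d}$ be symmetric, and set $P_i=\begin{bmatrix}0_{d\times d}&0\\0&1\end{bmatrix}$, $Q_i=\begin{bmatrix}A_i&0\\0&0\end{bmatrix}$, and $Z_{i+1}=Z_i+\frac1n P_iZ_iM(Z_i^\top Q_iZ_i)$ for $i=0,\dots,k$. Define $R_{w_\star}(w)=\frac{1}{2n}\sum_{i=1}^n\big(w^\top x^{(i)}-w_\star^\top x^{(i)}\big)^2$. Then there exist vectors $w^{\mathrm{gd}}_0,\dots,w^{\mathrm{gd}}_{k+1}\in\mathbb{R}^d$ such that the predicted label after layer $i$ satisfies $[Z_i]_{d+1,n+1}=-\langle x^{(n+1)},w^{\mathrm{gd}}_i\rangle$ for every $i\in\{0,\dots,k+1\}$, and such that for every $i\in\{0,\dots,k\}$ they are related by the preconditioned gradient step $$w^{\mathrm{gd}}_{i+1}=w^{\mathrm{gd}}_i+A_i\nabla R_{w_\star}(w^{\mathrm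{gd}}_i).$$
   Context: $[X]_{i,j}$ denotes the $(i,j)$ entry of a matrix $X$. The map $Z\mapsto PZM(Z^\top QZ)$ is a linear (softmax-free) self-attention layer with mask $M$. *)

From HB Require Import structures.
From mathcomp Require Import all_boot all_order all_algebra.
From mathcomp Require Import all_classical all_reals all_analysis.
Set Implicit Arguments. Unset Strict Implicit. Unset Printing Implicit Defensive.
Import Order.TTheory GRing.Theory Num.Theory.
Import numFieldNormedType.Exports.
Local Open Scope ring_scope.

Definition grad (R : realType) (d : nat) (f : 'cV[R]_d -> R^o) (w : 'cV[R]_d)
  : 'cV[R]_d := \col_j ('D_(delta_mx j 0) f w).

Definition risk (R : realType) (d n : nat) (xs : 'I_n -> 'cV[R]_d)
  (wstar w : 'cV[R]_d) : R^o :=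
  (2 * n%:R)^-1 * \sum_(i < n) (((w^T *m xs i) 0 0 - (wstar^T *m xs i) 0 0) ^+ 2).

(* Input matrix Z_0 in R^{(d+1) x (n+1)}; xs i = x^(i+1), xq = x^(n+1). *)
Definition Z0 (R : realType) (d n : nat) (xs : 'I_n -> 'cV[R]_d) (xq wstar : 'cV[R]_d)
  : 'M[R]_(d + 1, n + 1) :=
  block_mx (\matrix_(r < d, c < n) xs c r 0) xq
           (\row_(c < n) ((xs c)^T *m wstar) 0 0) (0 : 'M[R]_(1, 1)).

Definition maskM (R : realType) (n : nat) : 'M[R]_(n + 1) :=
  block_mx (1%:M : 'M[R]_n) 0 0 (0 : 'M[R]_1).

Definition Pmat (R : realType) (d : nat) : 'M[R]_(d + 1) :=
  block_mx (0 : 'M[R]_d) 0 0 (1%:M : 'M[R]_1).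

Definition Qmat (R : realType) (d : nat) (A : 'M[R]_d) : 'M[R]_(d + 1) :=
  block_mx A 0 0 (0 : 'M[R]_1).

Fixpoint Zlayer (R : realType) (d n : nat) (Z0m : 'M[R]_(d + 1, n + 1))
  (A : nat -> 'M[R]_d) (i : nat) : 'M[R]_(d + 1, n + 1) :=
  match i with
  | 0 => Z0m
  | i'.+1 => let Z := Zlayer Z0m A i' in
      Z + n%:R^-1 *: (Pmat R d *m Z *m maskM R n *m (Z^T *m Qmat (A i') *m Z))
  end.

(* Each layer only rewrites the last row of Z: with X the data matrix, the
   invariant is Z_i = [X, x_q; (w_star - w_i)^T X, -x_q^T w_i], where w_i are the
   iterates of preconditioned gradient descent from w_0 = 0.  Writing
   y = (w_star - w)^T X, one layer adds n^-1 y X^T A X to the label row and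
   n^-1 y X^T A x_q to the query entry; since grad R(w) = n^-1 X X^T (w - w_star)
   and A is symmetric, these are exactly the changes of (w_star - w)^T X and
   -x_q^T w under w |-> w + A grad R(w). *)
From HB Require Import structures.
From mathcomp Require Import all_boot all_order all_algebra.
From mathcomp Require Import all_classical all_reals all_analysis.
From mathcomp Require Import ring.
Set Implicit Arguments. Unset Strict Implicit. Unset Printing Implicit Defensive.
Import Order.TTheory GRing.Theory Num.Theory.
Import numFieldNormedType.Exports.
Local Open Scope ring_scope.

Section AffineDiffQuotient.
Local Open Scope classical_set_scope.

Lemma is_derive_affine_diff_quotient (R : realType) (V : normedModType R)
    (f : V -> R^o) (a v : V) (b c : R) :
  (forall h : R, h != 0 -> h^-1 * (f (h *: v + a) - f a) = b + h * c) ->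
  is_derive a v f b.
Proof.
move=> quotE.
have affine_cvg : (fun h : R => (b + h * c : R^o)) @ 0 --> (b + 0 * c : R^o).
  by apply: cvgD; [exact: cvg_cst | apply: cvgM; [exact: cvg_id | exact: cvg_cst]].
rewrite mul0r addr0 in affine_cvg.
have quot_cvg : (fun h : R => h^-1 *: ((f \o shift a) (h *: v) - f a)) @ 0^'
    --> (b : R^o).
  apply: (@cvg_trans _ ((fun h : R => (b + h * c : R^o)) @ 0^'));
    last exact: cvg_within_filter affine_cvg.
  apply: near_eq_cvg; near=> h; rewrite /= /shift -quotE //.
  by near: h; exact: nbhs_dnbhs_neq.
apply: DeriveDef; first by apply/cvg_ex; exists b.
exact: cvg_lim quot_cvg.
Unshelve. all: by end_near.
Qed.

End AffineDiffQuotient.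

Lemma trmx11 (R : nzRingType) (a : 'M[R]_1) : a^T = a.
Proof. by rewrite [a]mx11_scalar tr_scalar_mx. Qed.

Lemma layer_block (R : realType) (d n : nat) (X : 'M[R]_(d, n)) (xq : 'cV[R]_d) (y : 'rV[R]_n)
    (c : 'M[R]_1) (B : 'M[R]_d) :
  let Z := block_mx X xq y c in
  Z + n%:R^-1 *: (Pmat R d *m Z *m maskM R n *m (Z^T *m Qmat B *m Z)) =
  block_mx X xq (y + n%:R^-1 *: (y *m X^T *m B *m X))
                (c + n%:R^-1 *: (y *m X^T *m B *m xq)).
Proof.
rewrite /Pmat /maskM /Qmat tr_block_mx.
rewrite !mulmx_block !(mul0mx, mulmx0, mul1mx, mulmx1, addr0, add0r).
rewrite scale_block_mx add_block_mx !scaler0 !addr0.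
by rewrite !mulmxA.
Qed.

Section GradientDescent.

Variables (R : realType) (d n : nat) (xs : 'I_n -> 'cV[R]_d) (wstar : 'cV[R]_d).

Definition data_mx : 'M[R]_(d, n) := \matrix_(r < d, c < n) xs c r 0.

Lemma dot_scale_addl (h : R) (v w u : 'cV[R]_d) :
  ((h *: v + w)^T *m u) 0 0 = h * (v^T *m u) 0 0 + (w^T *m u) 0 0.
Proof. by rewrite linearD linearZ /= mulmxDl -scalemxAl !mxE. Qed.

Lemma dot_deltal (j : 'I_d) (u : 'cV[R]_d) :
  ((delta_mx j 0 : 'cV[R]_d)^T *m u) 0 0 = u j 0.
Proof.
rewrite mxE (bigD1 j) //= big1 ?addr0; first by rewrite !mxE !eqxx mul1r.
by move=> r /negbTE rj; rewrite !mxE rj mul0r.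
Qed.

Lemma is_derive_risk (w v : 'cV[R]_d) :
  is_derive w v (risk xs wstar)
    (n%:R^-1 * \sum_(i < n) (v^T *m xs i) 0 0 * ((w - wstar)^T *m xs i) 0 0).
Proof.
pose s i := (v^T *m xs i) 0 0.
pose t i := (w^T *m xs i) 0 0 - (wstar^T *m xs i) 0 0.
apply: (@is_derive_affine_diff_quotient _ _ _ _ _ _ ((2 * n%:R)^-1 * \sum_i s i ^+ 2)).
move=> h h0; rewrite /risk.
under eq_bigr => i _ do rewrite dot_scale_addl.
rewrite -mulrBr -sumrB mulrCA !mulr_sumr -big_split /=.
apply: eq_bigr => i _.
have -> : ((w - wstar)^T *m xs i) 0 0 = t i.
  by rewrite linearB mulmxBl mxE [in X in _ + X]mxE.
(* n may be 0, so n%:R^-1 must stay an opaque atom for [field]. *)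
rewrite /s /t invfM; set m := n%:R^-1.
move: ((v^T *m xs i) 0 0) ((w^T *m xs i) 0 0) ((wstar^T *m xs i) 0 0) => a b c.
have two_neq0 : (2 : R) != 0 by rewrite pnatr_eq0.
by field.
Qed.

Lemma grad_risk (w : 'cV[R]_d) :
  grad (risk xs wstar) w = n%:R^-1 *: (data_mx *m (data_mx^T *m (w - wstar))).
Proof.
apply/matrixP => j z; rewrite ord1 mxE (derive_val (is_derive := is_derive_risk _ _)).
rewrite mxE; congr (_ * _); rewrite mxE; apply: eq_bigr => i _.
rewrite dot_deltal !mxE; congr (_ * _); apply: eq_bigr => r _.
by rewrite !mxE mulrC.
Qed.

Variable A : nat -> 'M[R]_d.

Fixpoint gd_iterate (i : nat) : 'cV[R]_d :=
  if i is i'.+1 then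
    gd_iterate i' + A i' *m grad (risk xs wstar) (gd_iterate i')
  else 0.

Lemma Z0_block (xq : 'cV[R]_d) :
  Z0 xs xq wstar = block_mx data_mx xq (wstar^T *m data_mx) 0.
Proof.
congr block_mx; apply/matrixP => z c; rewrite ord1 !mxE.
by apply: eq_bigr => r _; rewrite !mxE mulrC.
Qed.

Lemma Zlayer_gd_block (k : nat) (xq : 'cV[R]_d) :
  (forall i, (i <= k)%N -> (A i)^T = A i) ->
  forall i, (i <= k.+1)%N ->
  Zlayer (Z0 xs xq wstar) A i =
  block_mx data_mx xq ((wstar - gd_iterate i)^T *m data_mx)
           (- (xq^T *m gd_iterate i)).
Proof.
move=> Asym; elim=> [_|i IH lt_ik].
  by rewrite /= subr0 mulmx0 oppr0 Z0_block.
(* Closing the main goal with [//] here would attempt a conversion check on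
   the matrices that does not terminate in practice. *)
rewrite /= IH; last exact: ltnW.
rewrite layer_block grad_risk /=.
have Ai_sym : (A i)^T = A i := Asym i lt_ik.
set w := gd_iterate i; set X := data_mx; set u := wstar - w.
have -> : w + A i *m (n%:R^-1 *: (X *m (X^T *m (w - wstar)))) =
          w - n%:R^-1 *: (A i *m X *m X^T *m u).
  by rewrite -opprB !mulmxN scalerN mulmxN -scalemxAr !mulmxA.
congr block_mx.
  rewrite opprB addrCA -/u addrC [in RHS]linearD /= [in RHS]linearZ /=.
  rewrite mulmxDl -scalemxAl.
  by rewrite !trmx_mul trmxK Ai_sym !mulmxA.
rewrite mulmxBr opprB addrC -scalemxAr; congr (_ + _); congr (_ *: _).
by rewrite -[RHS]trmx11 !trmx_mul !trmxK Ai_sym !mulmxA.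
Qed.

End GradientDescent.

Theorem lemma1 (R : realType) (d n k : nat) (hd : (0 < d)%N) (hn : (0 < n)%N)
  (hk : (0 < k)%N) (xs : 'I_n -> 'cV[R]_d) (xq wstar : 'cV[R]_d)
  (A : nat -> 'M[R]_d) (hA : forall i, (i <= k)%N -> (A i)^T = A i) :
  exists wgd : nat -> 'cV[R]_d,
    (forall i, (i <= k.+1)%N ->
       Zlayer (Z0 xs xq wstar) A i (rshift d (ord0 : 'I_1)) (rshift n (ord0 : 'I_1))
       = - ((xq^T *m wgd i) 0 0)) /\
    (forall i, (i <= k)%N ->
       wgd i.+1 = wgd i + A i *m grad (risk xs wstar) (wgd i)).
Proof.
exists (gd_iterate xs wstar A); split=> [i le_ik | i _ //].
by rewrite (Zlayer_gd_block xs wstar xq hA le_ik) block_mxEdr mxE.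
Qed.
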